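(* Let $k\ge 2$ and let $G$ be a group that is the free product of the cyclic groups generated by $\tau,\sigma_1,\dots,\sigma_{k-1}$, where the order of $\tau$ is infinite or divisible by $3$ and the order of each $\sigma_i$ is infinite or divisible by $2$. Let $(X,m)$ be a probability space on which $G$ acts by $m$-preserving transformations, freely on a set of full measure. Consider colourings $c:X\to\{A_1,A_2,A_3\}$ (indices taken modulo $3$) and the following rule at a point $x$: let $i$ be such that $c(\tau^{-1}x)=A_i$. If $c(\tau x)\in\{A_i,A_{i+1}\}$, then $x$ must be coloured $A_{i+1}$. If $c(\tau x)=A_{i-1}$, let $n$ be the number of points among $\tau x,\tau^{-1}x,\sigma_1x,\dots,\sigma_{k-1}x$ coloured $A_1$; if $0<n<k$ then $x$ must be coloured $c(\tau x)$, and otherwise $x$ must be coloured $A_{i+1}$. Then this colouring rule is paradoxical.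
   Context: A colouring satisfies the rule if the rule holds at $m$-almost every $x$. The rule is paradoxical if (a) some colouring of $X$ (not necessarily measurable) satisfies it, and (b) there is no pair $(\mu,c)$ where $\mu$ is a finitely additive $G$-invariant probability measure defined on a $G$-invariant algebra $\mathcal{B}$ of subsets of $X$ containing all $m$-measurable sets and extending $m$, and $c$ is a colouring satisfying the rule with $c^{-1}(A_j)\in\mathcal{B}$ for $j=1,2,3$. *)

From HB Require Import structures.
From mathcomp Require Import all_boot all_order all_algebra.
From mathcomp Require Import all_classical all_reals all_analysis.
Set Implicit Arguments. Unset Strict Implicit. Unset Printing Implicit Defensive.
Import Order.TTheory GRing.Theory Num.Theory.
Local Open Scope classical_set_scope.
Local Open Scope ring_scope.

(* Free product of cyclic groups with generators g_0 (= tau), g_1 .. g_(k-1)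
   (= sigma_1 .. sigma_(k-1)) of orders ord i (ord i = 0 means infinite order).
   Its elements are the reduced words: sequences of pairs (i, e) with i < k,
   e a nonzero integer exponent, normalised to 0 < e < ord i when ord i is
   finite, and with consecutive letters having distinct generator indices. *)

Definition letter_ok (k : nat) (ord : nat -> nat) (p : nat * int) : bool :=
  [&& (p.1 < k)%N, p.2 != 0 & (ord p.1 == 0)%N || (0 < p.2 < (ord p.1)%:Z)].

Definition reduced_word (k : nat) (ord : nat -> nat) (w : seq (nat * int)) : bool :=
  all (letter_ok k ord) w && sorted (fun p q : nat * int => p.1 != q.1) w.

Section Action.
Variable X : Type.
Variables t tinv : nat -> X -> X.

Definition gen_pow (i : nat) (e : int) : X -> X :=
  match e with
  | Posz n => iter n (t i)
  | Negz n => iter n.+1 (tinv i)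
  end.

Definition word_act (w : seq (nat * int)) : X -> X :=
  foldr (fun p f => gen_pow p.1 p.2 \o f) id w.

(* The colouring rule at x; colours A_1, A_2, A_3 are 0, 1, 2 in 'I_3,
   indices modulo 3.  tau = t 0, tau^{-1} = tinv 0, sigma_j = t j. *)
Definition col_next (i : 'I_3) : 'I_3 := inZp i.+1.

Definition count_A1 (k : nat) (c : X -> 'I_3) (x : X) : nat :=
  ((c (t 0 x) == ord0) + (c (tinv 0 x) == ord0)
   + \sum_(1 <= j < k) (c (t j x) == ord0))%N.

Definition colour_rule (k : nat) (c : X -> 'I_3) (x : X) : Prop :=
  let i := c (tinv 0 x) in
  let ct := c (t 0 x) in
  if (ct == i) || (ct == col_next i) then c x = col_next i
  else
    if (0 < count_A1 k c x < k)%N then c x = ct else c x = col_next i.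
End Action.

Section Paradox.
Context {R : realType} {d : measure_display} {X : measurableType d}.

Definition set_algebra (B : set (set X)) : Prop :=
  [/\ B set0, (forall A, B A -> B (~` A)) &
      (forall A C, B A -> B C -> B (A `|` C))].

Definition fin_add_prob (B : set (set X)) (mu : set X -> R) : Prop :=
  [/\ (forall A, B A -> 0 <= mu A), mu setT = 1 &
      (forall A C, B A -> B C -> A `&` C = set0 -> mu (A `|` C) = mu A + mu C)].

Definition satisfies_rule (m : probability X R) (k : nat) (t tinv : nat -> X -> X)
  (c : X -> 'I_3) : Prop :=
  {ae m, forall x, colour_rule t tinv k c x}.

Definition paradoxical_rule (m : probability X R) (k : nat) (ord : nat -> nat)
  (t tinv : nat -> X -> X) : Prop :=
  (exists c : X -> 'I_3, satisfies_rule m k t tinv c) /\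
  ~ (exists (B : set (set X)) (mu : set X -> R) (c : X -> 'I_3),
      [/\ set_algebra B, fin_add_prob B mu,
          (forall w, reduced_word k ord w -> forall A, B A ->
              B (word_act t tinv w @^-1` A) /\ mu (word_act t tinv w @^-1` A) = mu A),
          (forall A, measurable A -> B A /\ (mu A)%:E = m A) &
          satisfies_rule m k t tinv c /\
          (forall j : 'I_3, B (c @^-1` [set j]))]).
End Paradox.

From HB Require Import structures.
From mathcomp Require Import all_boot all_order all_algebra.
From mathcomp Require Import all_classical all_reals all_analysis.
From mathcomp Require Import zify lra.
Import Order.TTheory GRing.Theory Num.Theory.
Local Open Scope classical_set_scope.
Local Open Scope ring_scope.

(* The colouring is read off normal forms in the free product.  Along a reduced word, a
   letter tau^e adds e to the colour in Z/3 (A_1, A_2, A_3 being 0, 1, 2), and a letter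
   sigma_j^e with e odd sends A_1 to A_2 and the two other colours to A_1; this depends only
   on the group element because 3 divides the order of tau and 2 that of sigma_j.  Fixing a
   free base point r in every orbit containing one and colouring g r by the normal form of g
   gives c (tau^{+-1} x) = c x +- 1 and (c (sigma_j x) = A_1 iff c x <> A_1) at every free
   point x.  So tau^{-1} x, x, tau x carry consecutive colours and the count n of the rule is
   0 or k, hence the rule holds on the full-measure set of free points.

   Conversely, the rule at x, tau x and tau^2 x forces the same two relations for tau and
   sigma_1 (this uses k >= 2).  They hold almost everywhere, so an invariant finitely
   additive extension mu of m with measurable colour classes would satisfy
   mu A_1 <= mu A_2 <= mu A_3 <= mu A_1 and mu A_1 = 1 - mu A_1, i.e. 1/3 = 1/2. *)

Set Implicit Arguments. Unset Strict Implicit. Unset Printing Implicit Defensive.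

Section NormalForms.
Variables (X : Type) (k : nat) (ord : nat -> nat) (t tinv : nat -> X -> X).
Hypothesis t_bij : forall i, (i < k)%N -> cancel (t i) (tinv i) /\ cancel (tinv i) (t i).
Hypothesis t_ord : forall i, (i < k)%N -> (0 < ord i)%N -> iter (ord i) (t i) =1 id.

Definition step_act (a : nat * bool) : X -> X := if a.2 then t a.1 else tinv a.1.
Definition step_sign (b : bool) : int := if b then 1 else -1.

Lemma gen_powS i e x : (i < k)%N -> gen_pow t tinv i (e + 1) x = t i (gen_pow t tinv i e x).
Proof.
move=> ik; case: e => [n|[|n]] /=; first by rewrite addn1.
  by rewrite (proj2 (t_bij ik)).
by rewrite (proj2 (t_bij ik)) subn1.
Qed.

Lemma gen_pow_step i b e x : (i < k)%N ->
  gen_pow t tinv i (e + step_sign b) x = step_act (i, b) (gen_pow t tinv i e x).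
Proof.
move=> ik; rewrite /step_act; case: b => /=; first exact: gen_powS.
by rewrite -{2}(subrK 1 e) gen_powS // /= (proj1 (t_bij ik)).
Qed.

Lemma gen_pow_addn i e n x : (i < k)%N ->
  gen_pow t tinv i (e + n%:Z) x = iter n (t i) (gen_pow t tinv i e x).
Proof.
move=> ik; elim: n => [|n IHn]; first by rewrite addr0.
by rewrite -addn1 PoszD addrA gen_powS // IHn addn1.
Qed.

Lemma gen_pow_addn_mul i e q x : (i < k)%N ->
  gen_pow t tinv i (e + (q * ord i)%N%:Z) x = gen_pow t tinv i e x.
Proof.
move=> ik; have [->|ord_gt0] := posnP (ord i); first by rewrite muln0 addr0.
elim: q => [|q IHq]; first by rewrite addr0.
by rewrite mulSn PoszD addrA [in LHS]addrC addrA [_ + e]addrC gen_pow_addn // t_ord.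
Qed.

Lemma gen_pow_mod i e x : (i < k)%N ->
  gen_pow t tinv i (e %% (ord i)%:Z)%Z x = gen_pow t tinv i e x.
Proof.
move=> ik; rewrite [in RHS](divz_eq e (ord i)%:Z) addrC; case: (e %/ _)%Z => q.
  by rewrite -PoszM gen_pow_addn_mul.
rewrite NegzE mulNr -[in LHS](subrK (q.+1 * ord i)%N%:Z (e %% _)%Z).
by rewrite gen_pow_addn_mul.
Qed.

Hypothesis ord_neq1 : forall i, (i < k)%N -> ord i != 1%N.

Local Notation word_act := (word_act t tinv).

(* [e %% 0 = e], so exponents of generators of infinite order are left unchanged. *)
Definition exp_mod (i : nat) (e : int) : int := (e %% (ord i)%:Z)%Z.

Definition lmul_step (a : nat * bool) (w : seq (nat * int)) : seq (nat * int) :=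
  let: (i, b) := a in
  match w with
  | (j, e) :: w' =>
      if j == i then
        let e' := exp_mod i (e + step_sign b) in
        if e' == 0 then w' else (i, e') :: w'
      else (i, exp_mod i (step_sign b)) :: w
  | [::] => [:: (i, exp_mod i (step_sign b))]
  end.

Lemma word_act_lmul_step a w x : (a.1 < k)%N ->
  word_act (lmul_step a w) x = step_act a (word_act w x).
Proof.
case: a => i b /= ik; case: w => [|[j e] w] /=.
  by rewrite gen_pow_mod // -(add0r (step_sign b)) gen_pow_step.
case: eqP => [->|_] /=; last by rewrite gen_pow_mod // -(add0r (step_sign b)) gen_pow_step.
case: eqP => [e'0|_] /=; last by rewrite gen_pow_mod // gen_pow_step.
by rewrite -gen_pow_step // -gen_pow_mod // -/(exp_mod i _) e'0.
Qed.

Lemma letter_ok_exp_mod i e : (i < k)%N -> exp_mod i e != 0 -> letter_ok k ord (i, exp_mod i e).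
Proof.
move=> ik e'0; rewrite /letter_ok /= ik e'0 /=.
have [->//|ord_gt0] := posnP (ord i); apply/orP; right.
by rewrite lt0r e'0 modz_ge0 ?ltz_pmod // eqz_nat -lt0n.
Qed.

Lemma exp_mod_id i e : letter_ok k ord (i, e) -> exp_mod i e = e.
Proof.
rewrite /letter_ok /exp_mod /= => /and3P [_ _ /orP [/eqP ->|/andP [e_gt0 e_lt]]].
  by rewrite modz0.
by rewrite modz_small // e_lt ltW.
Qed.

Lemma exp_mod_sign_neq0 i b : (i < k)%N -> exp_mod i (step_sign b) != 0.
Proof.
move=> ik; apply/negP => /eqP/dvdz_mod0P.
by case: b; rewrite /step_sign unfold_in /= dvdn1 (negbTE (ord_neq1 ik)).
Qed.

Lemma reduced_lmul_step a w : (a.1 < k)%N ->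
  reduced_word k ord w -> reduced_word k ord (lmul_step a w).
Proof.
case: a => i b /= ik; case: w => [|[j e] w] /=.
  by rewrite /reduced_word /= letter_ok_exp_mod // exp_mod_sign_neq0.
rewrite /reduced_word /= => /andP [/andP [okj okw] srt].
case: eqP => [ji|/eqP ji]; last first.
  by rewrite /= letter_ok_exp_mod ?exp_mod_sign_neq0 // okj okw /= srt eq_sym ji.
case: eqP => [_|/eqP e'0]; first by rewrite okw (path_sorted srt).
by rewrite /= letter_ok_exp_mod // okw; case: w srt {okw} => //= ? ?; rewrite ji.
Qed.

Lemma lmul_stepK a w : (a.1 < k)%N -> reduced_word k ord w ->
  lmul_step (a.1, ~~ a.2) (lmul_step a w) = w.
Proof.
have signN b : step_sign (~~ b) = - step_sign b by case: b.
have e'K i b e : exp_mod i (exp_mod i (e + step_sign b) + step_sign (~~ b)) = exp_mod i e.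
  by rewrite /exp_mod modzDml signN addrK.
case: a => i b /= ik; case: w => [|[j e] w] /=.
  by move=> _; rewrite eqxx /= -(add0r (step_sign b)) e'K /exp_mod mod0z eqxx.
rewrite /reduced_word /= => /andP [/andP [okj _] srt].
case: eqP => [ji|_]; last by rewrite /= eqxx -(add0r (step_sign b)) e'K /exp_mod mod0z eqxx.
subst j; have e_eq : exp_mod i (exp_mod i (e + step_sign b) + step_sign (~~ b)) = e.
  by rewrite e'K exp_mod_id.
case: eqP => [e'0|_] /=.
  case: w srt => [|[j2 e2] w] /=; last move=> /andP [/negbTE j2i _].
    by rewrite -e_eq e'0 add0r.
  by rewrite eq_sym j2i -e_eq e'0 add0r.
by rewrite eqxx e_eq; case/and3P: okj => _ /negbTE ->.
Qed.

Definition valid_path (p : seq (nat * bool)) : bool := all (fun a => (a.1 < k)%N) p.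
Definition path_act (p : seq (nat * bool)) : X -> X := foldr (fun a f => step_act a \o f) id p.
Definition path_inv (p : seq (nat * bool)) : seq (nat * bool) :=
  rev (map (fun a => (a.1, ~~ a.2)) p).
Definition lmul_path (p : seq (nat * bool)) (w : seq (nat * int)) : seq (nat * int) :=
  foldr lmul_step w p.
Definition normal_form (p : seq (nat * bool)) : seq (nat * int) := lmul_path p [::].

Lemma reduced_lmul_path p w : valid_path p ->
  reduced_word k ord w -> reduced_word k ord (lmul_path p w).
Proof.
by elim: p => [|a p IHp] //= /andP [ak vp] rw; apply: reduced_lmul_step => //; apply: IHp.
Qed.

Lemma word_act_lmul_path p w x : valid_path p ->
  word_act (lmul_path p w) x = path_act p (word_act w x).
Proof. by elim: p => [|a p IHp] //= /andP [ak vp]; rewrite word_act_lmul_step // IHp. Qed.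

Lemma path_act_cat p q x : path_act (p ++ q) x = path_act p (path_act q x).
Proof. by elim: p => [|a p IHp] //=; rewrite IHp. Qed.

Lemma lmul_path_cat p q w : lmul_path (p ++ q) w = lmul_path p (lmul_path q w).
Proof. exact: foldr_cat. Qed.

Lemma valid_path_cat p q : valid_path (p ++ q) = valid_path p && valid_path q.
Proof. exact: all_cat. Qed.

Lemma valid_path_inv p : valid_path (path_inv p) = valid_path p.
Proof. by rewrite /valid_path /path_inv all_rev all_map. Qed.

Lemma path_inv_cons a p : path_inv (a :: p) = path_inv p ++ [:: (a.1, ~~ a.2)].
Proof. by rewrite /path_inv /= rev_cons cats1. Qed.

Lemma path_invK : involutive path_inv.
Proof.
move=> p; rewrite /path_inv map_rev revK -map_comp.
by elim: p => [|[i b] p IHp] //=; rewrite negbK IHp.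
Qed.

Lemma lmul_path_invK p w : valid_path p -> reduced_word k ord w ->
  lmul_path p (lmul_path (path_inv p) w) = w.
Proof.
elim: p w => [|[i b] p IHp] w //= /andP [ik vp] rw.
rewrite path_inv_cons lmul_path_cat IHp ?reduced_lmul_step //.
by have := @lmul_stepK (i, ~~ b) w ik rw; rewrite /= negbK.
Qed.

Lemma path_act_invK p x : valid_path p -> path_act p (path_act (path_inv p) x) = x.
Proof.
elim: p x => [|[i b] p IHp] x //= /andP [ik vp].
rewrite path_inv_cons path_act_cat /= IHp //.
by case: b; rewrite /step_act /= ?(proj1 (t_bij ik)) ?(proj2 (t_bij ik)).
Qed.

Lemma path_inv_actK p x : valid_path p -> path_act (path_inv p) (path_act p x) = x.
Proof. by move=> vp; rewrite -{2}[p]path_invK path_act_invK ?valid_path_inv. Qed.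

Definition free_point (x : X) : Prop :=
  forall w, reduced_word k ord w -> w != [::] -> word_act w x <> x.

Lemma normal_form_uniq r p q : free_point r -> valid_path p -> valid_path q ->
  path_act p r = path_act q r -> normal_form p = normal_form q.
Proof.
move=> r_free vp vq pq.
set z := lmul_path (path_inv q) (normal_form p).
have rz : reduced_word k ord z by rewrite reduced_lmul_path ?valid_path_inv ?reduced_lmul_path.
have zr : word_act z r = r.
  by rewrite word_act_lmul_path ?valid_path_inv // word_act_lmul_path //= pq path_inv_actK.
have z0 : z = [::] by apply/eqP/negPn/negP => nz; apply: r_free zr.
have -> : normal_form q = lmul_path q z by rewrite z0.
by rewrite lmul_path_invK ?reduced_lmul_path.
Qed.

End NormalForms.

Lemma reduced_generator k ord i : (i < k)%N -> ord i != 1%N -> reduced_word k ord [:: (i, 1)].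
Proof. by rewrite /reduced_word /letter_ok /= => -> /=; case: (ord i) => [|[|]]. Qed.

Lemma intr_modz (R : pzRingType) (n : nat) (e : int) :
  n%:R = 0 :> R -> ((e %% n%:Z)%Z)%:~R = e%:~R :> R.
Proof.
by move=> n0; rewrite [in RHS](divz_eq e n) [in RHS]intrD intrM
  -[(n%:Z)%:~R]/(n%:R) n0 mulr0 add0r.
Qed.

Lemma natr_Zp_dvd (m n : nat) : (1 < m)%N -> (m %| n)%N -> n%:R = 0 :> 'Z_m.
Proof. by move=> m_gt1 /dvdnP [q ->]; rewrite natrM pchar_Zp // mulr0. Qed.

Definition odd_exp (e : int) : bool := (e%:~R : 'Z_2) != 0.

Lemma odd_exp_sign e b : odd_exp (e + step_sign b) = ~~ odd_exp e.
Proof. by rewrite /odd_exp intrD; case: b; case: (e%:~R : 'Z_2) => [[|[|//]] ?]. Qed.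

Definition sigma_flip (v : 'I_3) : 'I_3 := if v == 0 then 1 else 0.

Lemma sigma_flip_eq0 v : (sigma_flip v == 0) = (v != 0).
Proof. by rewrite /sigma_flip; case: (v == 0). Qed.

Fixpoint word_colour (w : seq (nat * int)) : 'I_3 :=
  if w is (i, e) :: w' then
    if i == 0%N then word_colour w' + e%:~R
    else if odd_exp e then sigma_flip (word_colour w') else word_colour w'
  else 0.

Section WordColour.
Variable ord : nat -> nat.

Lemma word_colour_tau b w : (3 %| ord 0)%N ->
  word_colour (lmul_step ord (0, b) w) = word_colour w + (step_sign b)%:~R.
Proof.
move=> ord_tau; have modE e : ((exp_mod ord 0 e)%:~R : 'I_3) = e%:~R.
  by rewrite intr_modz //; exact: (@natr_Zp_dvd 3).
case: w => [|[j e] w] /=; first by rewrite modE add0r.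
case: (j =P 0%N) => [_|/eqP/negbTE j0] /=; last by rewrite j0 modE.
case: eqP => [e'0|_] /=; last by rewrite modE intrD addrA.
by rewrite -addrA -intrD -modE e'0 addr0.
Qed.

Lemma word_colour_sigma j b w : (0 < j)%N -> (2 %| ord j)%N ->
  (word_colour (lmul_step ord (j, b) w) == 0) = (word_colour w != 0).
Proof.
move=> j_gt0 ord_sigma; have oddE e : odd_exp (exp_mod ord j e) = odd_exp e.
  by rewrite /odd_exp intr_modz // natr_Zp_dvd.
have /negbTE j0 : j != 0%N by rewrite -lt0n.
case: w => [|[j2 e] w] /=.
  by rewrite j0 oddE -(add0r (step_sign b)) odd_exp_sign /odd_exp.
case: (j2 =P j) => [->|_] /=; last first.
  by rewrite j0 oddE -(add0r (step_sign b)) odd_exp_sign /= sigma_flip_eq0.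
rewrite j0; case: (exp_mod ord j _ =P 0) => [e'0|_] /=.
  have : odd_exp e by rewrite -[odd_exp e]negbK -(odd_exp_sign e b) -oddE e'0.
  by move->; rewrite sigma_flip_eq0 negbK.
by rewrite j0 oddE odd_exp_sign; case: (odd_exp e); rewrite /= sigma_flip_eq0 ?negbK.
Qed.

End WordColour.

Lemma addr1_neq (R : nzRingType) (v : R) : v + 1 != v.
Proof. by rewrite -subr_eq0 addrAC subrr add0r oner_eq0. Qed.

Lemma col_nextE (i : 'I_3) : col_next i = i + 1.
Proof. by apply: val_inj; rewrite /= modnDmr addn1. Qed.

Section ColourRule.
Variables (X : Type) (t tinv : nat -> X -> X) (c : X -> 'I_3).

Lemma colour_rule_of_shifts k x :
  c (t 0 x) = c x + 1 -> c (tinv 0 x) = c x - 1 ->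
  (forall j, (1 <= j < k)%N -> (c (t j x) == ord0) = (c x != ord0)) ->
  colour_rule t tinv k c x.
Proof.
move=> ct cti cs; rewrite /colour_rule /count_A1 ct cti col_nextE.
rewrite (eq_big_nat _ _ (fun j jk => congr1 nat_of_bool (cs j jk))) sum_nat_const_nat.
case: (c x) => [[|[|[|//]]] ?] /=.
all: by case: ifP => [?|_]; [lia | apply: val_inj].
Qed.

Lemma colour_rule_neq k y : colour_rule t tinv k c y -> c y != c (tinv 0 y).
Proof.
rewrite /colour_rule col_nextE; case: ifP => [_ ->|/norP [cty _]]; first exact: addr1_neq.
by case: ifP => _ ->; rewrite ?addr1_neq.
Qed.

Lemma shifts_of_colour_rule k x : cancel (t 0) (tinv 0) -> (2 <= k)%N ->
  colour_rule t tinv k c x -> colour_rule t tinv k c (t 0 x) ->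
  colour_rule t tinv k c (t 0 (t 0 x)) ->
  c (t 0 x) = c x + 1 /\ (c (t 1 x) == ord0) = (c x != ord0).
Proof.
move=> tK k_ge2 rx rtx rttx.
have ctt : c (t 0 (t 0 x)) != c (t 0 x) by have := colour_rule_neq rttx; rewrite tK.
have ct : c (t 0 x) = c x + 1.
  move: rtx; rewrite /colour_rule tK col_nextE.
  by case: ifP => // _; case: ifP => // _ ctt'; rewrite ctt' eqxx in ctt.
split=> //; have cxi := colour_rule_neq rx.
have sum_le : (\sum_(2 <= j < k) (c (t j x) == ord0) <= k - 2)%N.
  by rewrite -[(k - 2)%N]muln1 -sum_nat_const_nat leq_sum // => j _; apply: leq_b1.
move: rx cxi sum_le; rewrite /colour_rule /count_A1 ct col_nextE big_ltn //.
(* In each colour pattern of (tau^-1 x, x), the admissible counts of A_1 fix c (t 1 x). *)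
case: (c (tinv 0 x)) (c x) => [[|[|[|//]]] ?] [[|[|[|//]]] ?] //=.
all: case: (c (t 1 x) == ord0); case: ifP => [_ /(congr1 val) //|*]; lia.
Qed.

End ColourRule.

Section OrbitColouring.
Variables (X : pointedType) (k : nat) (ord : nat -> nat) (t tinv : nat -> X -> X).
Hypothesis t_bij : forall i, (i < k)%N -> cancel (t i) (tinv i) /\ cancel (tinv i) (t i).
Hypothesis t_ord : forall i, (i < k)%N -> (0 < ord i)%N -> iter (ord i) (t i) =1 id.
Hypothesis ord_neq1 : forall i, (i < k)%N -> ord i != 1%N.
Hypothesis ord_tau : (3 %| ord 0)%N.
Hypothesis ord_sigma : forall j, (1 <= j < k)%N -> (2 %| ord j)%N.
Hypothesis k_gt0 : (0 < k)%N.

Local Notation path_act := (path_act t tinv).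
Local Notation free_point := (free_point k ord t tinv).

Definition orbit (x : X) : set X := [set y | exists2 p, valid_path k p & path_act p x = y].

Definition orbit_base (x : X) : X := get (orbit x `&` free_point).

Definition orbit_colour (x : X) : 'I_3 :=
  let p := xget [::] [set p | valid_path k p /\ path_act p (orbit_base x) = x] in
  word_colour (normal_form ord p).

Lemma orbit_sym x y : orbit x y -> orbit y = orbit x.
Proof.
move=> [p vp <-]; apply/seteqP; split => z [q vq <-].
  by exists (q ++ p); rewrite ?valid_path_cat ?vq ?vp ?path_act_cat.
exists (q ++ path_inv p); first by rewrite valid_path_cat vq valid_path_inv.
by rewrite path_act_cat (path_inv_actK t_bij).
Qed.

Lemma orbit_colourE x p : free_point (orbit_base x) -> valid_path k p ->
  path_act p (orbit_base x) = x -> orbit_colour x = word_colour (normal_form ord p).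
Proof.
move=> base_free vp px; rewrite /orbit_colour.
set P := [set p | _]; have [vq qx] : P (xget [::] P) by apply: xgetPex; exists p.
by congr word_colour; apply: (normal_form_uniq t_bij t_ord ord_neq1 base_free); rewrite // qx.
Qed.

Lemma orbit_colour_rule x : free_point x -> colour_rule t tinv k orbit_colour x.
Proof.
move=> x_free.
have [[q vq qx] base_free] : (orbit x `&` free_point) (orbit_base x).
  by apply: xgetPex; exists x; split=> //; exists [::].
set p := path_inv q.
have vp : valid_path k p by rewrite valid_path_inv.
have px : path_act p (orbit_base x) = x by rewrite -qx (path_inv_actK t_bij).
have colour_step a : (a.1 < k)%N ->
    orbit_colour (step_act t tinv a x) = word_colour (lmul_step ord a (normal_form ord p)).
  move=> ak; have xa : orbit x (step_act t tinv a x) by exists [:: a]; rewrite /valid_path /= ?ak.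
  have base_xa : orbit_base (step_act t tinv a x) = orbit_base x.
    by rewrite /orbit_base (orbit_sym xa).
  by apply: (orbit_colourE (p := a :: p)); rewrite ?base_xa //= ?ak ?px.
have colour_x : orbit_colour x = word_colour (normal_form ord p) by apply: orbit_colourE.
apply: colour_rule_of_shifts.
- by rewrite -[t 0 x]/(step_act t tinv (0%N, true) x) colour_step // word_colour_tau // colour_x.
- rewrite -[tinv 0 x]/(step_act t tinv (0%N, false) x) colour_step // word_colour_tau //.
  by rewrite colour_x mulrN1z.
move=> j /andP [j_gt0 jk]; rewrite -[t j x]/(step_act t tinv (j, true) x) colour_step //.
by rewrite colour_x word_colour_sigma // ord_sigma ?j_gt0.
Qed.

End OrbitColouring.

Lemma ae_preimage d (X : measurableType d) (R : realType) (m : {measure set X -> \bar R})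
    (f : X -> X) (P : X -> Prop) :
  measurable_fun setT f -> (forall A, measurable A -> m (f @^-1` A) = m A) ->
  {ae m, forall x, P x} -> {ae m, forall x, P (f x)}.
Proof.
move=> mf f_pres [N [mN mN0 notP_N]]; exists (f @^-1` N); split => [||x /notP_N //].
  by rewrite -[f @^-1` N]setTI; apply: mf.
by rewrite f_pres.
Qed.

Section FinitelyAdditive.
Context {R : realType} {d : measure_display} {X : measurableType d}.
Variables (B : set (set X)) (mu : set X -> R).
Hypotheses (B_alg : set_algebra B) (mu_prob : fin_add_prob B mu).

Lemma set_algebraC A : B A -> B (~` A).
Proof. by case: B_alg => _ + _; apply. Qed.

Lemma set_algebraU A C : B A -> B C -> B (A `|` C).
Proof. by case: B_alg => _ _; apply. Qed.

Lemma set_algebraD A C : B A -> B C -> B (A `\` C).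
Proof.
move=> BA BC; rewrite setDE -[A]setCK -setCU.
by apply/set_algebraC/set_algebraU => //; apply: set_algebraC.
Qed.

Lemma mu_ge0 A : B A -> 0 <= mu A.
Proof. by case: mu_prob => + _ _; apply. Qed.

Lemma muU A C : B A -> B C -> A `&` C = set0 -> mu (A `|` C) = mu A + mu C.
Proof. by case: mu_prob => _ _; apply. Qed.

Lemma muC A : B A -> mu (~` A) = 1 - mu A.
Proof.
case: mu_prob => _ muT _ BA; rewrite -muT -(setUv A) muU ?setICr //.
  by rewrite [mu A + _]addrC addrK.
exact: set_algebraC BA.
Qed.

Lemma mu_le A C : B A -> B C -> A `<=` C -> mu A <= mu C.
Proof.
move=> BA BC sAC; have BCA := set_algebraD BC BA.
by rewrite -(setDUK sAC) muU ?setDIK // lerDl mu_ge0.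
Qed.

Lemma mu_le_null P Q N : B P -> B Q -> B N -> mu N = 0 ->
  P `<=` Q `|` N -> mu P <= mu Q.
Proof.
move=> BP BQ BN muN0 PQN; have BNQ := set_algebraD BN BQ.
apply: (le_trans (mu_le BP (set_algebraU BQ BN) PQN)).
have -> : Q `|` N = Q `|` (N `\` Q) by rewrite setUDr setDv setD0.
rewrite muU ?setDIK //.
by rewrite gerDl -muN0 mu_le // => x [].
Qed.

Lemma mu_le_ae (m : {measure set X -> \bar R}) P Q :
  (forall A, measurable A -> B A /\ (mu A)%:E = m A) ->
  B P -> B Q -> {ae m, forall x, P x -> Q x} -> mu P <= mu Q.
Proof.
move=> mu_ext BP BQ [N [mN mN0 notPQ_N]]; have [BN muN] := mu_ext N mN.
apply: (mu_le_null BP BQ BN); first by move: muN; rewrite mN0 => -[].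
move=> x Px; have [Qx|nQx] := pselect (Q x); [by left | right].
by apply: notPQ_N => /(_ Px).
Qed.

Lemma mu_colour_classes (c : X -> 'I_3) : (forall j, B (c @^-1` [set j])) ->
  mu (c @^-1` [set 0]) + mu (c @^-1` [set 1]) + mu (c @^-1` [set 2]) = 1.
Proof.
move=> Bc; case: mu_prob => _ muT _.
have cover : c @^-1` [set 0] `|` c @^-1` [set 1] `|` c @^-1` [set 2] = setT.
  apply/seteqP; split=> // x _; rewrite /preimage /=.
  by case: (c x) => [[|[|[|//]]] ?]; [left; left | left; right | right]; apply: val_inj.
have disj i j : i != j -> c @^-1` [set i] `&` c @^-1` [set j] = set0.
  by move=> /eqP ij; apply/seteqP; split=> // x [/= -> ].
rewrite -muT -cover !muU ?disj //; first exact: set_algebraU.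
by rewrite setIUl !disj // setU0.
Qed.

End FinitelyAdditive.

Section NoInvariantMean.
Context {R : realType} {d : measure_display} {X : measurableType d}.
Variables (m : probability X R) (B : set (set X)) (mu : set X -> R).
Variables (f g : X -> X) (c : X -> 'I_3).
Hypotheses (B_alg : set_algebra B) (mu_prob : fin_add_prob B mu).
Hypothesis mu_ext : forall A, measurable A -> B A /\ (mu A)%:E = m A.
Hypothesis f_inv : forall A, B A -> B (f @^-1` A) /\ mu (f @^-1` A) = mu A.
Hypothesis g_inv : forall A, B A -> B (g @^-1` A) /\ mu (g @^-1` A) = mu A.
Hypothesis c_meas : forall j, B (c @^-1` [set j]).

Lemma no_invariant_mean_of_shifts :
  ~ {ae m, forall x, c (f x) = c x + 1 /\ (c (g x) == ord0) = (c x != ord0)}.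
Proof.
move=> shifts; pose A j := c @^-1` [set j].
have mu_le_map h P Q : (forall A, B A -> B (h @^-1` A) /\ mu (h @^-1` A) = mu A) ->
    B P -> B Q -> {ae m, forall x, P x -> Q (h x)} -> mu P <= mu Q.
  move=> h_inv BP BQ PQ; have [BhQ <-] := h_inv Q BQ.
  exact: (mu_le_ae B_alg mu_prob mu_ext).
have f_le i j : j = i + 1 -> mu (A i) <= mu (A j).
  move=> ->; apply: (mu_le_map _ _ _ f_inv (c_meas _) (c_meas _)).
  by apply: filterS shifts => x [cf _]; rewrite /A /preimage /= cf => ->.
have le01 : mu (A 0) <= mu (A 1) by apply: f_le; apply: val_inj.
have le12 : mu (A 1) <= mu (A 2) by apply: f_le; apply: val_inj.
have le20 : mu (A 2) <= mu (A 0) by apply: f_le; apply: val_inj.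
have BnA0 := set_algebraC B_alg (c_meas 0).
have g_le : mu (A 0) <= mu (~` A 0).
  apply: (mu_le_map _ _ _ g_inv (c_meas 0) BnA0).
  by apply: filterS shifts => x [_ cg] cx; rewrite /A /preimage /= => /eqP; rewrite cg cx.
have g_ge : mu (~` A 0) <= mu (A 0).
  apply: (mu_le_map _ _ _ g_inv BnA0 (c_meas 0)).
  by apply: filterS shifts => x [_ cg] /eqP cx; rewrite /A /preimage /=; apply/eqP; rewrite cg.
have := mu_colour_classes B_alg mu_prob c_meas.
rewrite (muC B_alg mu_prob (c_meas 0)) in g_le g_ge.
rewrite -/(A 0) -/(A 1) -/(A 2); lra.
Qed.

End NoInvariantMean.

Unset Implicit Arguments. Set Strict Implicit.

Theorem proposition2 (R : realType) (d : measure_display) (X : measurableType d)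
  (m : probability X R) (k : nat) (hk : (2 <= k)%N) (ord : nat -> nat)
  (hord_tau : ord 0%N = 0%N \/ (0 < ord 0%N)%N /\ (3 %| ord 0%N)%N)
  (hord_sigma : forall i, (1 <= i < k)%N -> ord i = 0%N \/ (0 < ord i)%N /\ (2 %| ord i)%N)
  (t tinv : nat -> X -> X)
  (ht_inv : forall i, (i < k)%N -> cancel (t i) (tinv i) /\ cancel (tinv i) (t i))
  (ht_ord : forall i, (i < k)%N -> (0 < ord i)%N -> iter (ord i) (t i) =1 id)
  (hmeas : forall w, reduced_word k ord w -> measurable_fun setT (word_act t tinv w))
  (hpres : forall w, reduced_word k ord w -> forall A, measurable A ->
              m (word_act t tinv w @^-1` A) = m A)
  (hfree : {ae m, forall x, forall w, reduced_word k ord w -> w != [::] ->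
              word_act t tinv w x != x}) :
  paradoxical_rule m k ord t tinv.
Proof.
have k_gt0 : (0 < k)%N by apply: ltnW.
have ord_tau : (3 %| ord 0)%N by case: hord_tau => [->|[]].
have ord_sigma j : (1 <= j < k)%N -> (2 %| ord j)%N by case/hord_sigma => [->|[]].
have ord_neq1 i : (i < k)%N -> ord i != 1%N.
  case: i => [_|i ik]; first by case: hord_tau => [->|[_ /dvdnP [q ->]]] //; case: q.
  by case: (hord_sigma i.+1 ik) => [->|[_ /dvdnP [q ->]]] //; case: q.
split.
  exists (orbit_colour k ord t tinv); apply: filterS hfree => x x_free.
  by apply: orbit_colour_rule => // w rw /(x_free w rw)/eqP.
move=> [B [mu [c [B_alg mu_prob mu_inv mu_ext [c_rule c_meas]]]]].
have tau_red : reduced_word k ord [:: (0%N, 1)] by rewrite reduced_generator ?ord_neq1.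
have sigma_red : reduced_word k ord [:: (1%N, 1)] by rewrite reduced_generator ?ord_neq1.
apply: (no_invariant_mean_of_shifts B_alg mu_prob mu_ext
  (mu_inv _ tau_red) (mu_inv _ sigma_red) c_meas).
have rule_tau := ae_preimage (hmeas _ tau_red) (hpres _ tau_red) c_rule.
have rule_tau2 := ae_preimage (hmeas _ tau_red) (hpres _ tau_red) rule_tau.
apply: filterS3 c_rule rule_tau rule_tau2 => x; apply: shifts_of_colour_rule => //.
exact: (proj1 (ht_inv 0 k_gt0)).
Qed.
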